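(* Let $G$ be a finite group and $H\trianglelefteq G$ an atomically universally definable normal subgroup. Then $\mathrm{EQN\text{-}ID}(G/H)\le_{\mathrm m}^{\mathsf{AC}^0}\mathrm{EQN\text{-}ID}(G)$.
   Context: An expression over a group $G$ is a word over $G\cup\mathcal{X}\cup\mathcal{X}^{-1}$ ($\mathcal{X}$ variables, $\mathcal{X}^{-1}$ formal inverses), evaluated under assignments $\sigma:\mathcal{X}\to G$ with $\sigma(X^{-1})=\sigma(X)^{-1}$, $\sigma(g)=g$. $\mathrm{EQN\text{-}ID}(G)$: given an expression $\alpha$, decide whether $\sigma(\alpha)=1$ for all assignments $\sigma$. A subset $S\subseteq G$ is atomically universally definable if there is an expression $\alpha$ over variables $\{X,Y_1,Y_2,\dots\}$ such that $S=\{g\in G:(\sigma\cup[X\mapsto g])(\alpha)=1\text{ for all }\sigma:\{Y_1,Y_2,\dots\}\to G\}$. $\le_{\mathrm m}^{\mathsf{AC}^0}$ denotes many-one reducibility via functions computable by polynomial-size constant-depth Boolean circuits. *)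

From HB Require Import structures.
From mathcomp Require Import all_boot all_order all_fingroup.
Set Implicit Arguments. Unset Strict Implicit. Unset Printing Implicit Defensive.

(* Constant-depth, unbounded fan-in Boolean circuits, represented as trees  *)
(* (formulas); a constant-depth polynomial-size circuit unfolds into a      *)
(* constant-depth polynomial-size formula, so this is no restriction.       *)
Inductive circ (A : Type) : Type :=
  | CIn of nat & A
  | CConst of bool
  | CNot of circ A
  | CAnd of seq (circ A)
  | COr of seq (circ A).

Fixpoint ceval (A : eqType) (x : seq A) (c : circ A) : bool :=
  match c with
  | CIn i a => nth None (map Some x) i == Some a
  | CConst b => b
  | CNot c' => ~~ ceval x c'
  | CAnd cs => all (ceval x) cs
  | COr cs => has (ceval x) cs
  end.

Fixpoint csize (A : Type) (c : circ A) : nat :=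
  match c with
  | CIn _ _ => 1
  | CConst _ => 1
  | CNot c' => (csize c').+1
  | CAnd cs => (sumn (map (@csize A) cs)).+1
  | COr cs => (sumn (map (@csize A) cs)).+1
  end.

Fixpoint cdepth (A : Type) (c : circ A) : nat :=
  match c with
  | CIn _ _ => 0
  | CConst _ => 0
  | CNot c' => (cdepth c').+1
  | CAnd cs => (foldr maxn 0 (map (@cdepth A) cs)).+1
  | COr cs => (foldr maxn 0 (map (@cdepth A) cs)).+1
  end.

(* f : A^* -> B^* is AC^0-computable: for each input length n there are     *)
(* m n output positions; position j carries one circuit per value           *)
(* o : option B (None = blank), exactly one of which fires; the output is   *)
(* the sequence of non-blank symbols.  Depth is bounded by a constant d,    *)
(* sizes and number of outputs by a polynomial (n+1)^k.                     *)
Definition AC0_computable (A B : finType) (f : seq A -> seq B) : Prop :=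
  exists (d k : nat) (m : nat -> nat) (C : nat -> nat -> option B -> circ A),
    [/\ forall n, m n <= n.+1 ^ k,
        forall n j o, csize (C n j o) <= n.+1 ^ k,
        forall n j o, cdepth (C n j o) <= d,
        forall x j, j < m (size x) ->
          #|[pred o : option B | ceval x (C (size x) j o)]| = 1
      & forall x, f x =
          pmap id [seq odflt None [pick o : option B | ceval x (C (size x) j o)]
                  | j <- iota 0 (m (size x))] ].

Definition AC0_many_one (A B : finType) (L1 : seq A -> Prop) (L2 : seq B -> Prop)
  : Prop :=
  exists f : seq A -> seq B, AC0_computable f /\ forall x, L1 x <-> L2 (f x).

Inductive atom (T : Type) : Type :=
  | AConst of T
  | AVar of nat & bool.

Definition atom_eval (T : finGroupType) (s : nat -> T) (a : atom T) : T :=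
  match a with
  | AConst g => g
  | AVar i b => if b then ((s i)^-1)%g else s i
  end.

Definition expr_eval (T : finGroupType) (s : nat -> T) (e : seq (atom T)) : T :=
  foldr (fun a acc => (atom_eval s a * acc)%g) 1%g e.

Definition is_identity (T : finGroupType) (e : seq (atom T)) : Prop :=
  forall s : nat -> T, expr_eval s e = 1%g.

(* letter T = T (constants) + {X, X^-1 markers} + {binary digits}.         *)
(* X_i is encoded as the marker followed by the binary expansion of i      *)
(* (most significant bit first, no leading zeros, 0 = empty).               *)
Definition letter (T : Type) := (T + (bool + bool))%type.
Definition LConst (T : Type) (g : T) : letter T := inl g.
Definition LMark (T : Type) (inv : bool) : letter T := inr (inl inv).
Definition LBit (T : Type) (b : bool) : letter T := inr (inr b).

Fixpoint bin_aux (k n : nat) : seq bool :=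
  match k with
  | 0 => [::]
  | k'.+1 => if n is 0 then [::] else rcons (bin_aux k' n./2) (odd n)
  end.
Definition bin (n : nat) : seq bool := bin_aux n n.

Definition enc_atom (T : Type) (a : atom T) : seq (letter T) :=
  match a with
  | AConst g => [:: LConst g]
  | AVar i b => LMark T b :: map (@LBit T) (bin i)
  end.

Definition encode (T : Type) (e : seq (atom T)) : seq (letter T) :=
  flatten (map (@enc_atom T) e).

Definition EQN_ID (T : finGroupType) (w : seq (letter T)) : Prop :=
  exists e : seq (atom T), w = encode e /\ is_identity e.

(* S is atomically universally definable: variable 0 plays the role of X,  *)
(* variables 1, 2, ... the roles of Y_1, Y_2, ...                           *)
Definition atomically_universally_definable (T : finGroupType) (S : {set T})
  : Prop :=
  exists alpha : seq (atom T), forall g : T,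
    g \in S <-> (forall s : nat -> T, s 0 = g -> expr_eval s alpha = 1%g).

From HB Require Import structures.
From mathcomp Require Import all_boot all_order all_fingroup.
From mathcomp Require Import cyclic zify.
Set Implicit Arguments. Unset Strict Implicit. Unset Printing Implicit Defensive.

(* Lift an expression e over G/H to an expression X over G by choosing coset
   representatives for its constants.  If alpha(X_0; Y_1, Y_2, ...) defines H, then
   alpha with X substituted for X_0 and each Y_j renamed to a variable not occurring
   in e is an identity of G exactly when every value of X lies in H, that is, when e
   is an identity of G/H.  The variables of an input of length n are below 2^n, so
   Y_j can be renamed X_(2^n + j) at polynomial cost; X_0^-1 becomes X^(|G|-1).
   The output is prefixed with X 1 X^(|G|-1): this evaluates to 1, but makes the
   output an encoding only if the input is one, since the part of an encoding before
   a constant letter is again an encoding.  Each output letter is either fixed or the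
   image of a single input letter at a position depending only on the input length,
   so the reduction is computed by circuits of depth 1. *)

Definition nat_of_bits (s : seq bool) : nat :=
  foldl (fun acc (b : bool) => acc.*2 + b) 0 s.

Lemma nat_of_bits_rcons s b : nat_of_bits (rcons s b) = (nat_of_bits s).*2 + b.
Proof. by rewrite /nat_of_bits foldl_rcons. Qed.

Lemma nat_of_bits_lt s : nat_of_bits s < 2 ^ size s.
Proof.
elim/last_ind: s => [|s b IHs] //.
by rewrite nat_of_bits_rcons size_rcons expnS -muln2; case: b => /=; lia.
Qed.

Lemma bin_auxK k n : n <= k -> nat_of_bits (bin_aux k n) = n.
Proof.
elim: k n => [|k IHk] [|n] //= le_n_k.
have halves := odd_double_half n.+1; rewrite -muln2 in halves.
rewrite nat_of_bits_rcons IHk; lia.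
Qed.

Lemma binK : cancel bin nat_of_bits.
Proof. by move=> n; apply: bin_auxK. Qed.

Lemma ltn_exp2_size_bin n : n < 2 ^ size (bin n).
Proof. by rewrite -{1}(binK n) nat_of_bits_lt. Qed.

Lemma size_bin_aux_leq k n m : n < 2 ^ m -> size (bin_aux k n) <= m.
Proof.
elim: k n m => [|k IHk] [|n] [|m] //=; rewrite ?expn0 // => lt_n.
have halves := odd_double_half n.+1; rewrite -muln2 in halves.
rewrite size_rcons ltnS IHk //; rewrite expnS in lt_n; lia.
Qed.

Lemma size_bin_leq n m : n < 2 ^ m -> size (bin n) <= m.
Proof. exact: size_bin_aux_leq. Qed.

Section Encoding.
Variable T : Type.
Implicit Types (e : seq (atom T)) (w : seq (letter T)).

Lemma encode_cons a e : encode (a :: e) = enc_atom a ++ encode e.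
Proof. by []. Qed.

Definition decode_step (l : letter T) (st : seq bool * seq (atom T)) :=
  match l with
  | inl g => ([::], AConst g :: st.2)
  | inr (inl inv) => ([::], AVar T (nat_of_bits st.1) inv :: st.2)
  | inr (inr b) => (b :: st.1, st.2)
  end.

(* Read right to left, so that the bits of a variable are collected before its marker. *)
Definition decode w : seq (atom T) := (foldr decode_step ([::], [::]) w).2.

Lemma foldr_decode_step_encode e :
  foldr decode_step ([::], [::]) (encode e) = ([::], e).
Proof.
elim: e => [|a e IHe] //; rewrite encode_cons foldr_cat IHe.
case: a => [g|i inv] //=.
have collect_bits bs : foldr decode_step ([::], e) (map (@LBit T) bs) = (bs, e).
  by elim: bs => //= b bs ->.
by rewrite collect_bits binK.
Qed.

Lemma encodeK : cancel (@encode T) decode.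
Proof. by move=> e; rewrite /decode foldr_decode_step_encode. Qed.

Lemma encode_inj : injective (@encode T).
Proof. exact: can_inj encodeK. Qed.

Lemma encode_prefix_const e u x v :
  encode e = u ++ LConst x :: v -> exists e1, u = encode e1.
Proof.
elim: e u => [|a e IHe] [|l u] //; try by exists [::].
rewrite encode_cons; case: a => [g|i inv] /= [<-] => [|bits_e].
  by case/IHe=> e1 ->; exists (AConst g :: e1).
suff [u' -> /IHe[e1 ->]] :
    exists2 u', u = map (@LBit T) (bin i) ++ u' & encode e = u' ++ LConst x :: v.
  by exists (AVar T i inv :: e1).
elim: (bin i) u bits_e => [|b bs IHbs] u; first by exists u.
by case: u => [|l' u] //= [<- /IHbs[u' -> ->]]; exists u'.
Qed.

Definition vars_below (B : nat) e :=
  all (fun a => if a is AVar i _ then i < B else true) e.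

Lemma encode_vars_below e : vars_below (2 ^ size (encode e)) e.
Proof.
elim: e => [|a e IHe] //=; rewrite encode_cons size_cat.
apply/andP; split; last first.
  apply: sub_all IHe => -[//|i inv] /leq_trans; apply.
  exact: leq_pexp2l (leq_addl _ _).
case: a => //= i inv; apply: leq_trans (ltn_exp2_size_bin i) _.
by apply: leq_pexp2l; rewrite // size_map; lia.
Qed.

End Encoding.

Definition map_const (T T' : Type) (f : T -> T') (l : letter T) : letter T' :=
  match l with inl g => inl (f g) | inr z => inr z end.

Definition map_atom (T T' : Type) (f : T -> T') (a : atom T) : atom T' :=
  match a with AConst g => AConst (f g) | AVar i inv => AVar T' i inv end.

Lemma encode_map_atom (T T' : Type) (f : T -> T') (e : seq (atom T)) :
  encode (map (map_atom f) e) = map (map_const f) (encode e).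
Proof.
elim: e => [|a e IHe] //=; rewrite !encode_cons map_cat IHe.
by case: a => //= i inv; rewrite -map_comp.
Qed.

Lemma map_constK (T T' : Type) (f : T -> T') (g : T' -> T) :
  cancel f g -> cancel (map_const f) (map_const g).
Proof. by move=> fK [x|z] //=; rewrite fK. Qed.

Lemma map_atomK (T T' : Type) (f : T -> T') (g : T' -> T) :
  cancel f g -> cancel (map_atom f) (map_atom g).
Proof. by move=> fK [x|i inv] //=; rewrite fK. Qed.

Lemma vars_below_map_atom (T T' : Type) (f : T -> T') B (e : seq (atom T)) :
  vars_below B (map (map_atom f) e) = vars_below B e.
Proof. by rewrite /vars_below all_map; apply: eq_all => -[]. Qed.

Section Evaluation.
Variable gT : finGroupType.
Implicit Types (s : nat -> gT) (e : seq (atom gT)).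

Lemma expr_eval_cat s e1 e2 :
  expr_eval s (e1 ++ e2) = (expr_eval s e1 * expr_eval s e2)%g.
Proof. by elim: e1 => [|a e1 IHe] /=; rewrite ?mul1g ?IHe ?mulgA. Qed.

Lemma expr_eval_flatten_nseq s k e :
  expr_eval s (flatten (nseq k e)) = (expr_eval s e ^+ k)%g.
Proof. by elim: k => [|k IHk] //=; rewrite expr_eval_cat IHk expgS. Qed.

Lemma eq_expr_eval s1 s2 e : s1 =1 s2 -> expr_eval s1 e = expr_eval s2 e.
Proof. by move=> eq_s; elim: e => [|[g|i []] e IHe] //=; rewrite IHe ?eq_s. Qed.

Lemma eq_in_expr_eval B s1 s2 e : vars_below B e ->
  (forall i, i < B -> s1 i = s2 i) -> expr_eval s1 e = expr_eval s2 e.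
Proof.
move=> + eq_s; elim: e => [|[g|i inv] e IHe] //= => [/IHe -> //|].
by case/andP=> /eq_s -> /IHe ->.
Qed.

End Evaluation.

Lemma morph_expr_eval (aT rT : finGroupType) (D : {group aT})
    (f : {morphism D >-> rT}) (s : nat -> aT) (e : seq (atom aT)) :
  (forall x, x \in D) ->
  f (expr_eval s e) = expr_eval (f \o s) (map (map_atom f) e).
Proof.
move=> Dx; elim: e => [|a e IHe] /=; first exact: morph1.
rewrite morphM // IHe; congr (_ * _)%g.
by case: a => [g|i []] //=; rewrite morphV.
Qed.

Lemma invg_expg_card (gT : finGroupType) (x : gT) : (x^-1 = x ^+ #|gT|.-1)%g.
Proof.
have card_gt0 : 0 < #|gT| by rewrite -cardsT (cardG_gt0 [set: gT]%G).
by rewrite -[(x^-1)%g]mulg1 -(expg_cardG (in_setT x)) cardsT -(prednK card_gt0) expgS mulKg.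
Qed.

Section Substitution.
Variables (gT : finGroupType) (alpha : seq (atom gT)) (shift : nat).

Definition shift_atom (a : atom gT) : atom gT :=
  if a is AVar j inv then AVar gT (shift + j) inv else a.

Definition subst_atom (Z : Type) (g : atom gT -> seq Z) (X : seq Z) (a : atom gT) :=
  match a with
  | AVar 0 inv => if inv then flatten (nseq #|gT|.-1 X) else X
  | _ => g (shift_atom a)
  end.

(* [g] writes a single atom: as itself, as its encoding, or as template letters. *)
Definition substitute (Z : Type) (g : atom gT -> seq Z) (X : seq Z) : seq Z :=
  X ++ g (AConst 1%g) ++ flatten (nseq #|gT|.-1 X) ++ flatten (map (subst_atom g X) alpha).

Lemma eq_substitute (Z : Type) (g1 g2 : atom gT -> seq Z) X :
  g1 =1 g2 -> substitute g1 X = substitute g2 X.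
Proof.
move=> eq_g; rewrite /substitute eq_g (@eq_map _ _ (subst_atom g1 X) (subst_atom g2 X)) //.
by case=> [g|[|j] inv] /=.
Qed.

Lemma flatten_map_substitute (Z Z' : Type) (F : Z -> seq Z') g X :
  flatten (map F (substitute g X)) =
  substitute (fun a => flatten (map F (g a))) (flatten (map F X)).
Proof.
have F_pow k Y : flatten (map F (flatten (nseq k Y))) = flatten (nseq k (flatten (map F Y))).
  by elim: k => //= k IHk; rewrite map_cat flatten_cat IHk.
rewrite /substitute !(map_cat, flatten_cat) F_pow; congr (_ ++ (_ ++ (_ ++ _))).
elim: alpha => //= a al IHal; rewrite !(map_cat, flatten_cat) IHal; congr (_ ++ _).
by case: a => [g'|[|j] []] /=.
Qed.

Lemma map_substitute (Z Z' : Type) (F : Z -> Z') g X :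
  map F (substitute g X) = substitute (map F \o g) (map F X).
Proof.
have F_pow k Y : map F (flatten (nseq k Y)) = flatten (nseq k (map F Y)).
  by elim: k => //= k IHk; rewrite map_cat IHk.
rewrite /substitute !map_cat F_pow; congr (_ ++ (_ ++ (_ ++ _))).
elim: alpha => //= a al IHal; rewrite map_cat IHal; congr (_ ++ _).
by case: a => [g'|[|j] []] /=.
Qed.

Lemma encode_substitute (X : seq (atom gT)) :
  encode (substitute (fun a => [:: a]) X) = substitute (@enc_atom gT) (encode X).
Proof.
rewrite /encode flatten_map_substitute.
by apply: eq_substitute => a; rewrite /= cats0.
Qed.

Lemma expr_eval_substitute s (X : seq (atom gT)) :
  expr_eval s (substitute (fun a => [:: a]) X) =
  expr_eval (fun i => if i is 0 then expr_eval s X else s (shift + i)) alpha.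
Proof.
rewrite /substitute !expr_eval_cat expr_eval_flatten_nseq -invg_expg_card /=.
rewrite !mul1g mulKVg.
elim: alpha => //= a al IHal; rewrite expr_eval_cat IHal; congr (_ * _)%g.
by case: a => [g|[|j] []]; rewrite /= ?expr_eval_flatten_nseq -?invg_expg_card ?mulg1.
Qed.
End Substitution.

Lemma size_flatten_nseq (Z : Type) k (X : seq Z) : size (flatten (nseq k X)) = k * size X.
Proof. by rewrite size_flatten /shape map_nseq sumn_nseq mulnC. Qed.

Lemma all_substitute (gT : finGroupType) (alpha : seq (atom gT)) shift (Z : Type)
    (P : pred Z) (g : atom gT -> seq Z) (X : seq Z) :
  all P X -> (forall a, all P (g a)) -> all P (substitute alpha shift g X).
Proof.
move=> PX Pg; have P_pow k : all P (flatten (nseq k X)).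
  by elim: k => //= k IHk; rewrite all_cat PX IHk.
rewrite /substitute !all_cat PX Pg P_pow /=.
elim: alpha => // a al IHal; rewrite /= all_cat IHal andbT.
by case: a => [c|[|j] []]; rewrite /= ?PX ?P_pow ?Pg.
Qed.

Lemma size_bin_exp2_addn n j : size (bin (2 ^ n + j)) <= n + j + 1.
Proof.
apply: size_bin_leq; rewrite addn1 expnS expnD.
have := ltn_expl j (isT : 1 < 2); have : 0 < 2 ^ n by rewrite expn_gt0.
nia.
Qed.

Definition substitute_weight (gT : finGroupType) (alpha : seq (atom gT)) : nat :=
  #|gT|.+1 + sumn [seq #|gT| + (if a is AVar j _ then j else 0) + 2 | a <- alpha].

Lemma size_substitute (gT : finGroupType) (alpha : seq (atom gT)) (Z : Type)
    (g : atom gT -> seq Z) (X : seq Z) :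
  (forall a, size (g a) = size (enc_atom a)) ->
  size (substitute alpha (2 ^ size X) g X) <= (size X).+1 * substitute_weight alpha.
Proof.
move=> size_g; set n := size X; set N := #|gT|.
have size_atom a :
    size (subst_atom (2 ^ n) g X a) <= n.+1 * (N + (if a is AVar j _ then j else 0) + 2).
  case: a => [c|[|j] inv]; rewrite /= ?size_g /= ?size_map; try nia.
    by case: inv; rewrite ?size_flatten_nseq -/n -/N; nia.
  by have := size_bin_exp2_addn n j.+1; nia.
rewrite /substitute_weight /substitute !size_cat size_g size_flatten_nseq /= -/n -/N.
have : size (flatten (map (subst_atom (2 ^ n) g X) alpha)) <=
       n.+1 * sumn [seq N + (if a is AVar j _ then j else 0) + 2 | a <- alpha].
  elim: alpha => //= a al IHal; rewrite size_cat mulnDr.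
  exact: leq_add (size_atom a) IHal.
nia.
Qed.

Definition lift_coset (gT : finGroupType) (H : {group gT}) (c : coset_of H) : gT := repr c.
Arguments lift_coset {gT} H c.

Section Definability.
Variables (gT : finGroupType) (H : {group gT}) (alpha : seq (atom gT)).
Hypothesis nH : (H <| [set: gT])%g.
Hypothesis alpha_def : forall g : gT,
  g \in H <-> (forall s : nat -> gT, s 0 = g -> expr_eval s alpha = 1%g).

Lemma in_normH x : (x \in 'N(H))%g.
Proof. by rewrite (subsetP (normal_norm nH)) ?in_setT. Qed.

Lemma coset_expr_eval_lift s e :
  coset H (expr_eval s (map (map_atom (lift_coset H)) e)) = expr_eval (coset H \o s) e.
Proof.
by rewrite morph_expr_eval ?(mapK (map_atomK (@coset_reprK _ H))) //; apply: in_normH.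
Qed.

Lemma substitute_lift_identity shift e : vars_below shift e ->
  is_identity (substitute alpha shift (fun a => [:: a]) (map (map_atom (lift_coset H)) e))
  <-> is_identity e.
Proof.
rewrite -(vars_below_map_atom (lift_coset H)) => e_below.
split=> e_id s.
- pose s0 i := lift_coset H (s i); pose x := expr_eval s0 (map (map_atom (lift_coset H)) e).
  have <- : coset H x = expr_eval s e.
    by rewrite coset_expr_eval_lift; apply: eq_expr_eval => i; apply: coset_reprK.
  apply: coset_id; apply/alpha_def => t t0.
  pose st i := if i < shift then s0 i else t (i - shift).
  rewrite -(e_id st) expr_eval_substitute; apply: eq_expr_eval => -[|i] /=.
    by rewrite t0; apply: eq_in_expr_eval e_below _ => i lt_i; rewrite /st lt_i.
  by rewrite /st ltnNge leq_addr addKn.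
- rewrite expr_eval_substitute; apply: (proj1 (alpha_def _)) => //.
  by apply: coset_idr; rewrite ?in_normH // coset_expr_eval_lift e_id.
Qed.
End Definability.

Section Projection.
Variables (A B : finType) (a0 : A) (h : A -> B).

Definition in_range n (t : nat + B) := if t is inl i then i < n else true.

Definition source_letter (w : seq A) (t : nat + B) : B :=
  match t with inl i => h (nth a0 w i) | inr b => b end.

Definition source_circ (t : nat + B) (o : option B) : circ A :=
  match t with
  | inl i => COr [seq CIn i a | a <- enum A & Some (h a) == o]
  | inr b => CConst A (Some b == o)
  end.

Lemma ceval_source_circ w t o : in_range (size w) t ->
  ceval w (source_circ t o) = (o == Some (source_letter w t)).
Proof.
case: t => [i lt_i|b _] /=; last by rewrite eq_sym.
have w_i : nth None (map Some w) i = Some (nth a0 w i) by rewrite (nth_map a0).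
rewrite has_map; apply/hasP/eqP => [[a]|->].
  by rewrite mem_filter /= w_i => /andP[/eqP <- _] /eqP[->].
by exists (nth a0 w i); rewrite /= ?w_i // mem_filter eqxx mem_enum.
Qed.

Lemma csize_source_circ n t o : in_range n t -> csize (source_circ t o) <= n.+1 ^ #|A|.
Proof.
case: t => [i lt_i|b _] /=; last by rewrite expn_gt0.
have -> : sumn [seq csize c | c <- [seq CIn i a | a <- enum A & Some (h a) == o]]
          = size [seq a <- enum A | Some (h a) == o].
  by elim: (enum A) => //= a s IHs; case: ifP => /= _; rewrite IHs.
rewrite size_filter; apply: leq_ltn_trans (count_size _ _) _; rewrite -cardE.
by apply: ltn_expl; case: n lt_i.
Qed.

Lemma cdepth_source_circ t o : cdepth (source_circ t o) <= 1.
Proof. by case: t => //= i; elim: (enum A) => //= a s; case: ifP => //= _; rewrite max0n. Qed.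

Lemma AC0_computable_projection (f : seq A -> seq B) (tmpl : nat -> seq (nat + B)) k :
  (forall w, f w = map (source_letter w) (tmpl (size w))) ->
  (forall n, size (tmpl n) <= n.+1 ^ k) -> (forall n, all (in_range n) (tmpl n)) ->
  AC0_computable f.
Proof.
move=> f_tmpl size_tmpl tmpl_in_range.
pose t0 := inr (h a0) : nat + B.
have nth_in_range n j : in_range n (nth t0 (tmpl n) j).
  case: (ltnP j (size (tmpl n))) => [lt_j|/(nth_default t0)-> //].
  exact: (allP (tmpl_in_range n)) _ (mem_nth t0 lt_j).
pose C n j o := source_circ (nth t0 (tmpl n) j) o.
pose out w j := source_letter w (nth t0 (tmpl (size w)) j).
have C_spec w j o : ceval w (C (size w) j o) = (o == Some (out w j)).
  exact: ceval_source_circ.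
exists 1, (k + #|A|), (fun n => size (tmpl n)), C; split=> [n|n j o|n j o|w j _|w].
- exact: leq_trans (size_tmpl n) (leq_pexp2l _ (leq_addr _ _)).
- exact: leq_trans (csize_source_circ _ (nth_in_range n j)) (leq_pexp2l _ (leq_addl _ _)).
- exact: cdepth_source_circ.
- by rewrite -(card1 (Some (out w j))); apply: eq_card => o; rewrite !inE C_spec.
rewrite f_tmpl -[LHS](map_pK (fun _ => erefl) : cancel (map Some) (pmap id)).
rewrite -[in LHS](mkseq_nth t0 (tmpl (size w))) /mkseq -!map_comp; congr pmap.
apply: eq_map => j /=.
by case: pickP => [o|/(_ (Some (out w j)))]; rewrite C_spec ?eqxx // => /eqP.
Qed.

End Projection.

Section Reduction.
Variables (gT : finGroupType) (H : {group gT}) (alpha : seq (atom gT)).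

(* The empty input is kept apart: at length 0 the output may have at most one letter. *)
Definition reduce (w : seq (letter (coset_of H))) : seq (letter gT) :=
  if w is [::] then [::]
  else substitute alpha (2 ^ size w) (@enc_atom gT) (map (map_const (lift_coset H)) w).

Definition reduce_template (n : nat) : seq (nat + letter gT) :=
  if n is 0 then [::]
  else substitute alpha (2 ^ n) (map inr \o @enc_atom gT) (map inl (iota 0 n)).

Lemma reduce_source w :
  reduce w =
  map (source_letter (LConst 1%g) (map_const (lift_coset H)) w) (reduce_template (size w)).
Proof.
case: w => [|l w] //; set F := source_letter _ _ _; rewrite [RHS]map_substitute /reduce.
have -> : map (map_const (lift_coset H)) (l :: w) = map F (map inl (iota 0 (size (l :: w)))).
  by rewrite -[in LHS](mkseq_nth (LConst 1%g) (l :: w)) /mkseq -!map_comp.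
by apply: eq_substitute => a /=; rewrite -map_comp map_id.
Qed.

Lemma in_range_reduce_template n : all (in_range n) (reduce_template n).
Proof.
case: n => [|n] //; apply: all_substitute => [|a]; rewrite all_map; last exact/allP.
by apply/allP => i; rewrite mem_iota.
Qed.

Lemma size_reduce_template : exists k, forall n, size (reduce_template n) <= n.+1 ^ k.
Proof.
exists (substitute_weight alpha).+1 => -[|n] //.
have := @size_substitute _ alpha _ (map inr \o @enc_atom gT) (map inl (iota 0 n.+1)).
rewrite size_map size_iota => /(_ (fun a => size_map _ _)) /leq_trans; apply.
by rewrite expnS leq_mul2l ltnW ?orbT // ltn_expl.
Qed.

Lemma reduce_encode e : encode e != [::] ->
  reduce (encode e) = encode (substitute alpha (2 ^ size (encode e)) (fun a => [:: a])
                                         (map (map_atom (lift_coset H)) e)).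
Proof. by rewrite encode_substitute encode_map_atom /reduce; case: (encode e). Qed.

Hypothesis nH : (H <| [set: gT])%g.
Hypothesis alpha_def : forall g : gT,
  g \in H <-> (forall s : nat -> gT, s 0 = g -> expr_eval s alpha = 1%g).

Lemma EQN_ID_reduce w : EQN_ID w <-> EQN_ID (reduce w).
Proof.
have [->|w_ne] := eqVneq w [::]; first by split=> _; exists [::].
split=> [[e [w_e e_id]]|[e' [w_e' e'_id]]].
  subst w; rewrite reduce_encode //; eexists; split; first by [].
  exact/(substitute_lift_identity nH alpha_def (encode_vars_below e)).
have [e1 w_e1] : exists e1, map (map_const (lift_coset H)) w = encode e1.
  case: w w_ne w_e' => // l w _; rewrite /reduce /substitute => w_e'.
  exact: encode_prefix_const (esym w_e').
pose e := map (map_atom (coset H)) e1.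
have w_e : w = encode e.
  by rewrite encode_map_atom -w_e1 (mapK (map_constK (@coset_reprK _ H))).
exists e; split=> //; apply/(substitute_lift_identity nH alpha_def (encode_vars_below e)).
rewrite w_e in w_ne w_e'; rewrite reduce_encode // in w_e'.
by rewrite (encode_inj w_e').
Qed.
End Reduction.

Theorem lemma2p7 (gT : finGroupType) (H : {group gT}) :
  (H <| [set: gT])%g ->
  atomically_universally_definable (H : {set gT}) ->
  AC0_many_one (@EQN_ID (coset_of H)) (@EQN_ID gT).
Proof.
move=> nH [alpha alpha_def]; exists (reduce alpha); split; last exact: EQN_ID_reduce.
have [k size_tmpl] := size_reduce_template alpha.
apply: AC0_computable_projection (reduce_source alpha) size_tmpl _.
exact: in_range_reduce_template.
Qed.
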